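(* \textsf{SpecRel} $\vdash$ the following sentence: for all bodies $o,o'$ and all $\bar x,\bar x',\bar y,\bar y'\in Q^4$, if $\mathsf{IOb}(o)$, $\mathsf{IOb}(o')$, $\forall b\,(\mathsf{W}(o,b,\bar x)\leftrightarrow\mathsf{W}(o',b,\bar x'))$ and $\forall b\,(\mathsf{W}(o,b,\bar y)\leftrightarrow\mathsf{W}(o',b,\bar y'))$, then $\mu(\bar x,\bar y)=\mu(\bar x',\bar y')$, where $\mu(\bar x,\bar y):=(x_1-y_1)^2+(x_2-y_2)^2+(x_3-y_3)^2-(x_4-y_4)^2$. Here $\vdash$ denotes derivability in a standard proof system of first-order logic.
   Context: Two-sorted first-order language $\{B,\mathsf{IB},\mathsf{Ph},Q,+,\cdot,<,\mathsf{W}\}$: sorts $B$ (bodies) and $Q$ (quantities); $\mathsf{IB},\mathsf{Ph}$ unary relations on $B$ (inertial bodies, photons); $+,\cdot$ binary functions and $<$ binary relation on $Q$; $\mathsf{W}$ a 6-ary relation of sort $B\,B\,Q\,Q\,Q\,Q$ ($\mathsf{W}(o,b,x,y,z,t)$: observer $o$ coordinatizes body $b$ at $\langle x,y,z,t\rangle$). Bars denote 4-tuples of $Q$-variables. Defined: $\mathsf{Ob}(o):\iff\exists b\,\bar x\ \mathsf{W}(o,b,\bar x)$; $\mathsf{IOb}(o):\iff \mathsf{IB}(o)\wedge\mathsf{Ob}(o)$. \textsf{SpecRel} consists of the axioms: AxField: $\langle Q;+,\cdot,<\rangle$ is a linearly ordered field (with zero $0$). AxSelf: $\forall o\,x y z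 t\ \mathsf{IOb}(o)\to(\mathsf{W}(o,o,x,y,z,t)\leftrightarrow x=y=z=0)$. AxPh: $\forall o\,\bar x\,\bar x'\ \mathsf{IOb}(o)\to\big(\exists p(\mathsf{Ph}(p)\wedge\mathsf{W}(o,p,\bar x)\wedge\mathsf{W}(o,p,\bar x'))\leftrightarrow (x_1-x'_1)^2+(x_2-x'_2)^2+(x_3-x'_3)^2=(x_4-x'_4)^2\big)$. AxEv: $\forall o\,o'\,\bar x\ \mathsf{IOb}(o)\wedge\mathsf{IOb}(o')\to\exists\bar x'\,\forall b\ (\mathsf{W}(o,b,\bar x)\leftrightarrow\mathsf{W}(o',b,\bar x'))$. AxSymd: for all $o,o',\bar x,\bar x',\bar y,\bar y'$: if $\mathsf{IOb}(o)$, $\mathsf{IOb}(o')$, $x_4=y_4$, $x'_4=y'_4$, $\forall b(\mathsf{W}(o,b,\bar x)\leftrightarrow\mathsf{W}(o',b,\bar x'))$ and $\forall b(\mathsf{W}(o,b,\bar y)\leftrightarrow\mathsf{W}(o',b,\bar y'))$, then $(x_1-y_1)^2+(x_2-y_2)^2+(x_3-y_3)^2=(x'_1-y'_1)^2+(x'_2-y'_2)^2+(x'_3-y'_3)^2$. *)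

(* A model of the two-sorted language: the quantity sort Q is a
   realFieldType (= linearly ordered field, i.e. AxField), bodies form a type B. *)
From HB Require Import structures.
From mathcomp Require Import all_boot all_order all_algebra.
Set Implicit Arguments. Unset Strict Implicit. Unset Printing Implicit Defensive.
Import Order.TTheory GRing.Theory Num.Theory.
Local Open Scope ring_scope.

Section SpecRelDefs.
Variables (Q : realFieldType) (B : Type).
Variables (IB Ph : B -> Prop) (W : B -> B -> Q -> Q -> Q -> Q -> Prop).

Definition Ob (o : B) : Prop := exists b x y z t, W o b x y z t.
Definition IOb (o : B) : Prop := IB o /\ Ob o.

Definition AxSelf : Prop :=
  forall o x y z t, IOb o -> (W o o x y z t <-> (x = 0 /\ y = 0 /\ z = 0)).

Definition AxPh : Prop :=
  forall o x1 x2 x3 x4 x1' x2' x3' x4', IOb o ->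
    ((exists p, Ph p /\ W o p x1 x2 x3 x4 /\ W o p x1' x2' x3' x4') <->
     (x1 - x1') ^+ 2 + (x2 - x2') ^+ 2 + (x3 - x3') ^+ 2 = (x4 - x4') ^+ 2).

Definition AxEv : Prop :=
  forall o o' x1 x2 x3 x4, IOb o -> IOb o' ->
    exists x1' x2' x3' x4',
      forall b, W o b x1 x2 x3 x4 <-> W o' b x1' x2' x3' x4'.

Definition AxSymd : Prop :=
  forall o o' x1 x2 x3 x4 x1' x2' x3' x4' y1 y2 y3 y4 y1' y2' y3' y4',
    IOb o -> IOb o' -> x4 = y4 -> x4' = y4' ->
    (forall b, W o b x1 x2 x3 x4 <-> W o' b x1' x2' x3' x4') ->
    (forall b, W o b y1 y2 y3 y4 <-> W o' b y1' y2' y3' y4') ->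
    (x1 - y1) ^+ 2 + (x2 - y2) ^+ 2 + (x3 - y3) ^+ 2 =
    (x1' - y1') ^+ 2 + (x2' - y2') ^+ 2 + (x3' - y3') ^+ 2.

(* SpecRel; AxField is built into the choice Q : realFieldType. *)
Definition SpecRel : Prop := AxSelf /\ AxPh /\ AxEv /\ AxSymd.
End SpecRelDefs.

Definition mu (Q : realFieldType) (x1 x2 x3 x4 y1 y2 y3 y4 : Q) : Q :=
  (x1 - y1) ^+ 2 + (x2 - y2) ^+ 2 + (x3 - y3) ^+ 2 - (x4 - y4) ^+ 2.

From HB Require Import structures.
From mathcomp Require Import all_boot all_order all_algebra.
From mathcomp Require Import ring lra.
From Stdlib Require Import ClassicalEpsilon.
Set Implicit Arguments. Unset Strict Implicit. Unset Printing Implicit Defensive.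
Import Order.TTheory GRing.Theory Num.Theory.
Local Open Scope ring_scope.

(* Fix inertial observers [o], [o'].  By AxEv the coordinates of an event for
   [o] determine those for [o'], giving a map [f] on [Q^4]; AxPh makes event
   coordinates unique (an event is determined by its light cone) and says that
   [f] preserves lightlike separation in both directions.  An Alexandrov-Zeeman
   argument makes [f] affine: for lightlike [a], [b] with [mdot a b != 0] the
   images of [x], [x + a], [x + b], [x + a + b] form a parallelogram, so the
   increments of [f] along a lightlike basis do not depend on the base point.
   Its linear part [psi] maps each light ray to a light ray, scaling it by a
   factor [sigma] independent of the ray; [sigma] is additive and commutes with
   inversion, hence is a field endomorphism.  AxSymd, applied to a spacelike
   vector that stays simultaneous for both observers, gives [sigma s ^+ 2 = s ^+ 2],
   so [sigma] is the identity; the linear map [psi] then preserves the light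
   cone, hence is conformal, and AxSymd once more fixes the conformal factor to 1. *)

Record vec (Q : Type) := Vec { c1 : Q; c2 : Q; c3 : Q; c4 : Q }.
Arguments c1 {Q}. Arguments c2 {Q}. Arguments c3 {Q}. Arguments c4 {Q}.

Section VecModule.
Variable Q : realFieldType.
Implicit Types (u v : vec Q) (s : Q).

Definition vec_tuple v := (c1 v, c2 v, c3 v, c4 v).
Definition tuple_vec (t : Q * Q * Q * Q) := let: (a, b, c, d) := t in Vec a b c d.
Lemma vec_tupleK : cancel vec_tuple tuple_vec. Proof. by case. Qed.

Lemma vec_eq u v :
  c1 u = c1 v -> c2 u = c2 v -> c3 u = c3 v -> c4 u = c4 v -> u = v.
Proof. by case: u => ????; case: v => ???? /= -> -> -> ->. Qed.

Definition vzero := Vec (0 : Q) 0 0 0.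
Definition vopp v := Vec (- c1 v) (- c2 v) (- c3 v) (- c4 v).
Definition vadd u v := Vec (c1 u + c1 v) (c2 u + c2 v) (c3 u + c3 v) (c4 u + c4 v).
Definition vscale s v := Vec (s * c1 v) (s * c2 v) (s * c3 v) (s * c4 v).

Lemma vaddA : associative vadd. Proof. by move=> ???; apply: vec_eq => /=; ring. Qed.
Lemma vaddC : commutative vadd. Proof. by move=> ??; apply: vec_eq => /=; ring. Qed.
Lemma vadd0 : left_id vzero vadd. Proof. by move=> ?; apply: vec_eq => /=; ring. Qed.
Lemma vaddN : left_inverse vzero vopp vadd. Proof. by move=> ?; apply: vec_eq => /=; ring. Qed.

Lemma vscaleA a b v : vscale a (vscale b v) = vscale (a * b) v.
Proof. by apply: vec_eq => /=; ring. Qed.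
Lemma vscale1 : left_id 1 vscale. Proof. by move=> ?; apply: vec_eq => /=; ring. Qed.
Lemma vscaleDr : right_distributive vscale vadd.
Proof. by move=> ???; apply: vec_eq => /=; ring. Qed.
Lemma vscaleDl v : {morph vscale^~ v : a b / a + b >-> vadd a b}.
Proof. by move=> ??; apply: vec_eq => /=; ring. Qed.
End VecModule.

HB.instance Definition _ (Q : realFieldType) :=
  Choice.copy (vec Q) (can_type (@vec_tupleK Q)).
HB.instance Definition _ (Q : realFieldType) :=
  GRing.isZmodule.Build (vec Q) (@vaddA Q) (@vaddC Q) (@vadd0 Q) (@vaddN Q).
HB.instance Definition _ (Q : realFieldType) :=
  GRing.Zmodule_isLmodule.Build Q (vec Q)
    (@vscaleA Q) (@vscale1 Q) (@vscaleDr Q) (@vscaleDl Q).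

Definition mdot (Q : realFieldType) (u v : vec Q) :=
  c1 u * c1 v + c2 u * c2 v + c3 u * c3 v - c4 u * c4 v.
Definition mq (Q : realFieldType) (v : vec Q) := mdot v v.

Ltac vec_ring := apply: vec_eq => /=; ring.

Ltac vec_compute := unfold mq, mdot; simpl;
  first [ ring | vec_ring | apply/eqP => /(congr1 c4) /=; lra | apply/eqP; lra ].

Section Minkowski.
Variable Q : realFieldType.
Implicit Types (u v w a b k : vec Q) (s t : Q).

Lemma mu_mq (x1 x2 x3 x4 y1 y2 y3 y4 : Q) :
  mu x1 x2 x3 x4 y1 y2 y3 y4 = mq (Vec x1 x2 x3 x4 - Vec y1 y2 y3 y4).
Proof. by rewrite /mu /mq /mdot /= !expr2. Qed.

Lemma mdotC u v : mdot u v = mdot v u.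
Proof. by vec_compute. Qed.

Lemma mdotZl s u v : mdot (s *: u) v = s * mdot u v.
Proof. by vec_compute. Qed.

Lemma mdotDl u v w : mdot (u + v) w = mdot u w + mdot v w.
Proof. by vec_compute. Qed.

Lemma mdot0r u : mdot u 0 = 0.
Proof. by vec_compute. Qed.

Lemma mdot_neq0l u v : mdot u v != 0 -> u != 0.
Proof. by apply: contraNneq => ->; rewrite mdotC mdot0r. Qed.

Lemma mdot_neq0r u v : mdot u v != 0 -> v != 0.
Proof. by rewrite mdotC; apply: mdot_neq0l. Qed.

Lemma mqZ s v : mq (s *: v) = s ^+ 2 * mq v.
Proof. by vec_compute. Qed.

Lemma mqB u v : mq (u - v) = mq u + mq v - 2 * mdot u v.
Proof. by vec_compute. Qed.

Lemma mqN v : mq (- v) = mq v.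
Proof. by vec_compute. Qed.

Lemma mqZ_lightlike s v : mq v = 0 -> mq (s *: v) = 0.
Proof. by move=> hv; rewrite mqZ hv mulr0. Qed.

Lemma mq_orth_lightlike_shift u k t : mq k = 0 -> mdot u k = 0 -> mq (u - t *: k) = mq u.
Proof. by move=> hk huk; rewrite mqB mqZ mdotC mdotZl mdotC hk huk !mulr0 subr0 addr0. Qed.

Lemma lightlike_sub_orth u v : mq u = 0 -> mq v = 0 -> mq (u - v) = 0 -> mdot u v = 0.
Proof. by rewrite mqB => -> ->; lra. Qed.

Lemma sqr_sum3_eq0 (a b c : Q) : a ^+ 2 + b ^+ 2 + c ^+ 2 = 0 -> [/\ a = 0, b = 0 & c = 0].
Proof. by move=> h; split; nra. Qed.

Lemma lightlike_time_neq0 v : mq v = 0 -> v != 0 -> c4 v != 0.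
Proof.
move=> hv; apply: contra_neq => h4; move: hv; rewrite /mq /mdot h4 mul0r subr0 -!expr2.
by case/sqr_sum3_eq0 => h1 h2 h3; apply: vec_eq.
Qed.

(* With [l] the ratio of time components, [mq (a - l *: b)] is a sum of three
   squares that vanishes. *)
Lemma lightlike_orth_colinear a b :
  mq a = 0 -> mq b = 0 -> b != 0 -> mdot a b = 0 -> a = (c4 a / c4 b) *: b.
Proof.
move=> ha hb b_neq0 hab; have hb4 := lightlike_time_neq0 hb b_neq0.
set l := c4 a / c4 b.
have e4 : c4 a = l * c4 b by rewrite /l divfK.
have : (c1 a - l * c1 b) ^+ 2 + (c2 a - l * c2 b) ^+ 2 + (c3 a - l * c3 b) ^+ 2 = 0.
  have -> : (c1 a - l * c1 b) ^+ 2 + (c2 a - l * c2 b) ^+ 2 + (c3 a - l * c3 b) ^+ 2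
    = mq a - 2 * l * mdot a b + l ^+ 2 * mq b + (c4 a - l * c4 b) ^+ 2.
    by rewrite /mq /mdot; ring.
  by rewrite ha hb hab e4; ring.
by case/sqr_sum3_eq0 => h1 h2 h3; apply: vec_eq => /=; lra.
Qed.

Lemma lightlike_triangle_colinear k u :
  mq k = 0 -> k != 0 -> mq u = 0 -> mq (u - k) = 0 -> u = (c4 u / c4 k) *: k.
Proof.
by move=> hk k_neq0 hu huk; apply: lightlike_orth_colinear => //; apply: lightlike_sub_orth.
Qed.

Lemma lightlike_line_through p k z :
  mq k = 0 -> k != 0 -> mq (z - p) = 0 -> mq (z - (p + k)) = 0 ->
  exists t, z = p + t *: k.
Proof.
move=> hk k0 hz; rewrite opprD addrA => hzk; exists (c4 (z - p) / c4 k).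
by rewrite -(lightlike_triangle_colinear hk k0 hz hzk) addrC subrK.
Qed.

Definition n1 : vec Q := Vec 1 0 0 1.
Definition n2 : vec Q := Vec (-1) 0 0 1.
Definition n3 : vec Q := Vec 0 1 0 1.
Definition n4 : vec Q := Vec 0 0 1 1.

Definition null_basis := [:: n1; n2; n3; n4].

Lemma null_basis_lightlike p : p \in null_basis -> mq p = 0.
Proof. by rewrite !inE => /or4P[]/eqP->; vec_compute. Qed.

Lemma null_basis_neq0 p : p \in null_basis -> p != 0.
Proof. by rewrite !inE => /or4P[]/eqP->; vec_compute. Qed.

Definition ncoord1 v := (c1 v + c4 v - c2 v - c3 v) / 2.
Definition ncoord2 v := (c4 v - c2 v - c3 v - c1 v) / 2.

Lemma null_basis_decomp v :
  v = ncoord1 v *: n1 + ncoord2 v *: n2 + c2 v *: n3 + c3 v *: n4.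
Proof. by apply: vec_eq; rewrite /= /ncoord1 /ncoord2; field. Qed.

Lemma lightlike_orth_eq0 w :
  (forall k, mq k = 0 -> mdot k w = 0) -> w = 0.
Proof.
move=> hw; have := hw n1; have := hw n2; have := hw n3; have := hw n4.
rewrite /mq /mdot /= => h4 h3 h2 h1.
by apply: vec_eq => /=; lra.
Qed.

(* Along a light ray from [u], [mq (_ - v)] is affine; vanishing at two of its
   points forces [u - v] to be orthogonal to every null vector. *)
Lemma lightcone_inj u v : (forall p, mq (p - u) = 0 -> mq (p - v) = 0) -> u = v.
Proof.
move=> huv; apply/eqP; rewrite -subr_eq0; apply/eqP/lightlike_orth_eq0 => k hk.
have ray s : mq (u + s *: k - v) = mq (u - v) + 2 * s * mdot k (u - v).
  by move: hk; rewrite /mq /mdot /= => hk; nra.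
have on_cone s : mq (u + s *: k - v) = 0.
  by apply: huv; rewrite addrC addKr mqZ_lightlike.
by move: (ray 1) (ray 2); rewrite !on_cone; lra.
Qed.

Lemma mdot_comb3 (al be ga : Q) a b c d :
  mdot (al *: a + be *: b + ga *: c) d = al * mdot a d + be * mdot b d + ga * mdot c d.
Proof. by vec_compute. Qed.

Lemma lightlike_indep3 a b c (al be ga : Q) :
  mq a = 0 -> mq b = 0 -> mq c = 0 ->
  mdot a b != 0 -> mdot a c != 0 -> mdot b c != 0 ->
  al *: a + be *: b + ga *: c = 0 -> [/\ al = 0, be = 0 & ga = 0].
Proof.
move=> ha hb hc hab hac hbc e.
have dot_with d : al * mdot a d + be * mdot b d + ga * mdot c d = 0.
  by rewrite -mdot_comb3 e mdotC mdot0r.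
have := dot_with a; have := dot_with b; have := dot_with c.
rewrite -/(mq a) -/(mq b) -/(mq c) ha hb hc (mdotC b a) (mdotC c a) (mdotC c b).
rewrite !mulr0 !add0r !addr0.
move: hab hac hbc => /negPf hab /negPf hac /negPf hbc.
move: (mdot a b) (mdot a c) (mdot b c) hab hac hbc => ab ac bc hab hac hbc Ec Eb Ea.
have : ga * (2 * (ac * bc)) = 0.
  have -> : ga * (2 * (ac * bc)) =
    ac * (al * ab + ga * bc) + bc * (be * ab + ga * ac) - ab * (al * ac + be * bc) by ring.
  by rewrite Ea Eb Ec; ring.
move/eqP; rewrite !mulf_eq0 hac hbc pnatr_eq0 /= !orbF => /eqP ga0.
move: Ea Eb; rewrite ga0 !mul0r !addr0 => /eqP; rewrite mulf_eq0 hab orbF => /eqP be0.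
by move/eqP; rewrite mulf_eq0 hab orbF => /eqP al0.
Qed.

Definition m1 : vec Q := Vec 0 1 0 (-1).
Definition m2 : vec Q := Vec 0 0 1 (-1).
Definition m3 : vec Q := Vec 2 1 2 3.
Definition m4 : vec Q := Vec 1 2 2 3.

(* Null vectors spanning the space and non-orthogonal to every vector of [null_basis]. *)
Definition transversal := [:: m1; m2; m3; m4].

Lemma transversal_lightlike m : m \in transversal -> mq m = 0.
Proof. by rewrite !inE => /or4P[]/eqP->; vec_compute. Qed.

Lemma null_basis_transversal p m : p \in null_basis -> m \in transversal -> mdot p m != 0.
Proof.
by rewrite !inE => /or4P[]/eqP-> /or4P[]/eqP->; vec_compute.
Qed.

Lemma transversal_decomp w :
  w = (5 * c1 w + 5 * c2 w - 3 * c3 w - 3 * c4 w) / 8 *: m1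
    + (- 2 * c1 w - 2 * c2 w + 6 * c3 w - 2 * c4 w) / 8 *: m2
    + (7 * c1 w - c2 w - c3 w - c4 w) / 8 *: m3
    + (- 6 * c1 w + 2 * c2 w + 2 * c3 w + 2 * c4 w) / 8 *: m4.
Proof. by apply: vec_eq => /=; field. Qed.

Definition e1 : vec Q := Vec 1 0 0 0.
Definition e2 : vec Q := Vec 0 1 0 0.
Definition e3 : vec Q := Vec 0 0 1 0.
Definition e4 : vec Q := Vec 0 0 0 1.

Lemma std_basis_decomp v : v = c1 v *: e1 + c2 v *: e2 + c3 v *: e3 + c4 v *: e4.
Proof. by vec_ring. Qed.

Lemma mq_comb2 (al be : Q) a b c :
  mq (al *: a + be *: b + c) = al ^+ 2 * mq a + be ^+ 2 * mq b + mq c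
    + 2 * (al * be * mdot a b + al * mdot a c + be * mdot b c).
Proof. by vec_compute. Qed.

Lemma mq_comb4 (x1 x2 x3 x4 : Q) b1 b2 b3 b4 :
  mq (x1 *: b1 + x2 *: b2 + x3 *: b3 + x4 *: b4) =
  x1 * x1 * mq b1 + x2 * x2 * mq b2 + x3 * x3 * mq b3 + x4 * x4 * mq b4
  + 2 * (x1 * x2 * mdot b1 b2 + x1 * x3 * mdot b1 b3 + x1 * x4 * mdot b1 b4
       + x2 * x3 * mdot b2 b3 + x2 * x4 * mdot b2 b4 + x3 * x4 * mdot b3 b4).
Proof. by vec_compute. Qed.

(* Nine null vectors force the Gram matrix of [g e1, ..., g e4] to be
   proportional to the Minkowski one. *)
Lemma lightlike_preserving_conformal (g : vec Q -> vec Q) :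
  {morph g : u v / u + v} -> (forall s v, g (s *: v) = s *: g v) ->
  (forall v, mq v = 0 -> mq (g v) = 0) ->
  forall v, mq (g v) = mq (g e1) * mq v.
Proof.
move=> gD gZ g_null.
have g_std v : g v = c1 v *: g e1 + c2 v *: g e2 + c3 v *: g e3 + c4 v *: g e4.
  by rewrite {1}(std_basis_decomp v) !gD !gZ.
have G x1 x2 x3 x4 : mq (Vec x1 x2 x3 x4) = 0 ->
  mq (x1 *: g e1 + x2 *: g e2 + x3 *: g e3 + x4 *: g e4) = 0.
  by move/g_null; rewrite g_std.
have N1 := G 1 0 0 1 ltac:(vec_compute).
have N2 := G (-1) 0 0 1 ltac:(vec_compute).
have N3 := G 0 1 0 1 ltac:(vec_compute).
have N4 := G 0 (-1) 0 1 ltac:(vec_compute).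
have N5 := G 0 0 1 1 ltac:(vec_compute).
have N6 := G 0 0 (-1) 1 ltac:(vec_compute).
have N7 := G 3 4 0 5 ltac:(vec_compute).
have N8 := G 3 0 4 5 ltac:(vec_compute).
have N9 := G 0 3 4 5 ltac:(vec_compute).
move=> v; rewrite !mq_comb4 in N1 N2 N3 N4 N5 N6 N7 N8 N9; rewrite (g_std v) mq_comb4.
have -> : mq v = c1 v * c1 v + c2 v * c2 v + c3 v * c3 v - c4 v * c4 v by [].
move: N1 N2 N3 N4 N5 N6 N7 N8 N9.
move: (mq (g e1)) (mq (g e2)) (mq (g e3)) (mq (g e4)) (mdot (g e1) (g e2)) (mdot (g e1) (g e3))
  (mdot (g e1) (g e4)) (mdot (g e2) (g e3)) (mdot (g e2) (g e4)) (mdot (g e3) (g e4)).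
move=> g11 g22 g33 g44 g12 g13 g14 g23 g24 g34 N1 N2 N3 N4 N5 N6 N7 N8 N9.
have -> : g22 = g11 by lra.
have -> : g33 = g11 by lra.
have -> : g44 = - g11 by lra.
have -> : g12 = 0 by lra.
have -> : g13 = 0 by lra.
have -> : g14 = 0 by lra.
have -> : g23 = 0 by lra.
have -> : g24 = 0 by lra.
have -> : g34 = 0 by lra.
ring.
Qed.

End Minkowski.

Arguments n1 {Q}. Arguments n2 {Q}. Arguments n3 {Q}. Arguments n4 {Q}.
Arguments m1 {Q}. Arguments m2 {Q}. Arguments m3 {Q}. Arguments m4 {Q}.
Arguments e1 {Q}. Arguments e2 {Q}. Arguments e3 {Q}. Arguments e4 {Q}.
Arguments null_basis {Q}. Arguments transversal {Q}.

Section AdditiveMaps.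
Variables (Q : realFieldType) (g : Q -> Q).
Hypothesis gD : {morph g : x y / x + y}.
Hypothesis g1 : g 1 = 1.

Lemma additive_map0 : g 0 = 0.
Proof. by have := gD 0 0; rewrite addr0 => h; lra. Qed.

Lemma additive_mapN x : g (- x) = - g x.
Proof. by apply/eqP; rewrite -subr_eq0 opprK -gD addNr additive_map0. Qed.

(* Hua's identity [x^-1 - (x + 1)^-1 = (x^2 + x)^-1] turns inverse
   preservation into square preservation. *)
Lemma additive_inv_multiplicative :
  injective g -> {morph g : x / x^-1} -> {morph g : x y / x * y}.
Proof.
move=> g_inj gV.
have gN1 : g (-1) = -1 by rewrite additive_mapN g1.
have g_sqr x : g (x * x) = g x * g x.
  have [->|x0] := eqVneq x 0; first by rewrite mul0r additive_map0 mul0r.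
  have [->|xN1] := eqVneq x (-1); first by rewrite mulN1r opprK g1 gN1 mulN1r opprK.
  have x1 : x + 1 != 0 by apply: contra_neq xN1 => h; lra.
  have gx0 : g x != 0 by apply: contra_neq x0 => h; apply: g_inj; rewrite h additive_map0.
  have gx1 : g x + 1 != 0.
    by apply: contra_neq xN1 => h; apply: g_inj; rewrite gN1; lra.
  have hua (y : Q) : y != 0 -> y + 1 != 0 -> y^-1 - (y + 1)^-1 = (y * y + y)^-1.
    move=> y0 y1; rewrite (_ : y * y + y = y * (y + 1)); last by ring.
    by field; rewrite y0 y1.
  have := congr1 g (hua x x0 x1).
  rewrite gD additive_mapN !gV gD g1 gD hua // => /invr_inj; lra.
move=> x y; have := g_sqr (x + y).
have -> : (x + y) * (x + y) = x * x + (x * y + x * y) + y * y by ring.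
by rewrite !gD !g_sqr; lra.
Qed.

Lemma additive_sqr_id : (forall x, g x ^+ 2 = x ^+ 2) -> g =1 id.
Proof. by move=> g_sqr x; have := g_sqr (x + 1); rewrite gD g1 => h; have := g_sqr x; nra. Qed.

End AdditiveMaps.

Section LightlikePreserving.
Variables (Q : realFieldType) (f : vec Q -> vec Q).
Hypothesis f_inj : injective f.
Hypothesis f_surj : forall y, exists x, f x = y.
Hypothesis f_lightlike : forall x y, mq (x - y) = 0 <-> mq (f x - f y) = 0.

Lemma f_lightlike_step x v : mq v = 0 -> mq (f (x + v) - f x) = 0.
Proof. by move=> hv; apply: (f_lightlike _ _).1; rewrite addrC addKr. Qed.

Lemma f_line_preimage p k z :
  mq k = 0 -> k != 0 -> mq (z - f p) = 0 -> mq (z - f (p + k)) = 0 ->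
  exists s, z = f (p + s *: k).
Proof.
move=> hk k0; have [y <-] := f_surj z => /(f_lightlike _ _).2 hp /(f_lightlike _ _).2 hpk.
by have [s ->] := lightlike_line_through hk k0 hp hpk; exists s.
Qed.

(* Otherwise pick [z] on the image light line through [f x] and [f (x + b)]
   with [z - f (x + a)] orthogonal to [c']; all points [f (x + a) + t *: c'] of
   the image light line through [f (x + a)] then have the same interval to [z].
   As [z = f (x + s *: b)] is lightlike-separated from [f (x + a + s *: b)], it is
   so from a second point [f (x + a + r *: b)] of that line, and pulling back,
   [mdot a b != 0] forces [r = s]. *)
Lemma f_edges_orth x a b : mq a = 0 -> mq b = 0 -> mdot a b != 0 ->
  mdot (f (x + b) - f x) (f (x + a + b) - f (x + a)) = 0.
Proof.
move=> ha hb hab; have b0 := mdot_neq0r hab.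
set b' := f (x + b) - f x; set c' := f (x + a + b) - f (x + a).
have hb' : mq b' = 0 := f_lightlike_step x hb.
have hc' : mq c' = 0 := f_lightlike_step (x + a) hb.
have c'0 : c' != 0.
  apply: contraNneq b0 => /eqP; rewrite subr_eq0 => /eqP /f_inj e.
  by rewrite -(addKr (x + a) b) e addNr.
have [//|bc0] := eqVneq (mdot b' c') 0.
set s0 := - mdot (f x - f (x + a)) c' / mdot b' c'.
set z := f x + s0 *: b'.
have [s hs] : exists s, z = f (x + s *: b).
  apply: f_line_preimage => //; first by rewrite /z addrC addKr mqZ_lightlike.
  by rewrite (_ : z - _ = (s0 - 1) *: b') ?mqZ_lightlike //; vec_ring.
have shift t : mq (z - (f (x + a) + t *: c')) = mq (z - f (x + a)).
  rewrite opprD addrA mq_orth_lightlike_shift // (_ : z - _ = (f x - f (x + a)) + s0 *: b').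
    by rewrite mdotDl mdotZl /s0; field.
  by vec_ring.
have [t ht] : exists t, f (x + a + s *: b) = f (x + a) + t *: c'.
  apply: lightlike_line_through => //; first by apply: f_lightlike_step; apply: mqZ_lightlike.
  rewrite /c' [f (x + a) + _]addrC subrK; apply: (f_lightlike _ _).1.
  by rewrite (_ : _ - _ = (s - 1) *: b) ?mqZ_lightlike //; vec_ring.
have z_on_cone : mq (z - f (x + a)) = 0.
  rewrite -(shift t) -ht hs; apply: (f_lightlike _ _).1.
  by rewrite (_ : _ - _ = - a) ?mqN //; vec_ring.
have [r hr] : exists r, f (x + a) + (t + 1) *: c' = f (x + a + r *: b).
  apply: f_line_preimage => //; first by rewrite addrC addKr mqZ_lightlike.
  by rewrite (_ : _ - _ = t *: c') ?mqZ_lightlike //; vec_ring.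
have : mq (f (x + s *: b) - f (x + a + r *: b)) = 0 by rewrite -hs -hr shift.
move/(f_lightlike _ _).2; rewrite (_ : _ - _ = (s - r) *: b - a); last by vec_ring.
rewrite mqB mqZ ha hb mdotZl mulr0 !add0r => /eqP.
rewrite oppr_eq0 !mulf_eq0 mdotC (negPf hab) pnatr_eq0 orbF /= subr_eq0 => /eqP rs.
move: hr; rewrite -rs ht => /addrI/eqP.
by rewrite -subr_eq0 -scalerBl addrC addKr scale1r (negPf c'0).
Qed.

Lemma f_parallelogram x a b : mq a = 0 -> mq b = 0 -> mdot a b != 0 ->
  f (x + a + b) = f (x + a) + f (x + b) - f x.
Proof.
move=> ha hb hab.
set X := f x; set A := f (x + a); set B := f (x + b); set Y := f (x + a + b).
have hA : mq (A - X) = 0 := f_lightlike_step x ha.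
have hB : mq (B - X) = 0 := f_lightlike_step x hb.
have hYA : mq (Y - A) = 0 := f_lightlike_step (x + a) hb.
have hYB : mq (Y - B) = 0 by rewrite /Y addrAC; apply: f_lightlike_step.
have hAB : mdot (A - X) (B - X) != 0.
  apply: contra_neq hab => hAB; apply: lightlike_sub_orth => //.
  rewrite (_ : a - b = (x + a) - (x + b)); last by vec_ring.
  apply: (f_lightlike _ _).2; rewrite -/A -/B (_ : A - B = (A - X) - (B - X)); last by vec_ring.
  by rewrite mqB hA hB hAB; ring.
have [l eYA] : exists l, Y - A = l *: (B - X).
  eexists; apply: lightlike_orth_colinear => //; first exact: mdot_neq0r hAB.
  by rewrite mdotC f_edges_orth.
have [m eYB] : exists m, Y - B = m *: (A - X).
  eexists; apply: lightlike_orth_colinear => //; first exact: mdot_neq0l hAB.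
  by rewrite mdotC /Y addrAC f_edges_orth // mdotC.
have : (1 - m) * mdot (A - X) (B - X) = 0.
  have E : (1 - m) *: (A - X) = (1 - l) *: (B - X).
    by rewrite !scalerBl !scale1r -eYA -eYB; vec_ring.
  by rewrite -mdotZl E mdotZl -/(mq (B - X)) hB mulr0.
move/eqP; rewrite mulf_eq0 (negPf hAB) orbF subr_eq0 => /eqP m1.
by rewrite -[Y](subrK B) eYB -m1 scale1r; vec_ring.
Qed.

Definition incr x v := f (x + v) - f x.

Lemma incr_translate_line x p m d : mq p = 0 -> mq m = 0 -> mdot p m != 0 ->
  incr (x + d *: m) p = incr x p.
Proof.
move=> hp hm hpm; have [->|d0] := eqVneq d 0; first by rewrite scale0r addr0.
rewrite /incr addrAC f_parallelogram ?mqZ_lightlike //; first by vec_ring.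
by rewrite mdotC mdotZl mulf_neq0 // mdotC.
Qed.

Lemma incr_translate p x w : mq p = 0 ->
  (forall m, m \in transversal -> mdot p m != 0) -> incr (x + w) p = incr x p.
Proof.
move=> hp hpm.
have step y m d : m \in transversal -> incr (y + d *: m) p = incr y p.
  by move=> hm; apply: incr_translate_line; [|apply: transversal_lightlike|apply: hpm].
by rewrite (transversal_decomp w) !addrA !step ?inE ?eqxx ?orbT.
Qed.

Lemma f_translate_null_basis p c y : p \in null_basis ->
  f (y + c *: p) = f y + incr 0 (c *: p).
Proof.
move=> hp; have [->|c0] := eqVneq c 0; first by rewrite /incr !scale0r !addr0 subrr addr0.
have := @incr_translate (c *: p) 0 y (mqZ_lightlike c (null_basis_lightlike hp)).
rewrite add0r /incr => <-; first by rewrite subrKC.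
by move=> m hm; rewrite mdotZl mulf_neq0 // null_basis_transversal.
Qed.

Lemma f_affine x v : f (x + v) = f x + f v - f 0.
Proof.
rewrite -[f v](congr1 f (add0r v)) (null_basis_decomp v) !addrA.
by rewrite !f_translate_null_basis ?inE ?eqxx ?orbT //; vec_ring.
Qed.

End LightlikePreserving.

Section AdditiveLightlikePreserving.
Variables (Q : realFieldType) (psi : vec Q -> vec Q).
Hypothesis psiD : {morph psi : u v / u + v}.
Hypothesis psi_inj : injective psi.
Hypothesis psi_surj : forall y, exists x, psi x = y.
Hypothesis psi_lightlike : forall v, mq v = 0 <-> mq (psi v) = 0.
Hypothesis psi_spacelike : forall v, c4 v = 0 -> c4 (psi v) = 0 -> mq (psi v) = mq v.

Lemma psi0 : psi 0 = 0.
Proof. by apply: (addrI (psi 0)); rewrite -psiD !addr0. Qed.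

Lemma psiB u v : psi (u - v) = psi u - psi v.
Proof. by apply: (addIr (psi v)); rewrite -psiD !subrK. Qed.

Lemma psi_neq0 v : v != 0 -> psi v != 0.
Proof. by apply: contra_neq => h; apply: psi_inj; rewrite h psi0. Qed.

Lemma psi_null v : mq v = 0 -> mq (psi v) = 0.
Proof. exact: (psi_lightlike v).1. Qed.

Lemma psi_mdot_neq0 a b : mq a = 0 -> mq b = 0 -> mdot a b != 0 ->
  mdot (psi a) (psi b) != 0.
Proof.
move=> ha hb; apply: contra_neq => h; apply: lightlike_sub_orth => //.
by apply/psi_lightlike; rewrite psiB mqB !psi_null // h; ring.
Qed.

Definition ray_factor n s := c4 (psi (s *: n)) / c4 (psi n).

Lemma psi_ray n s : mq n = 0 -> n != 0 -> psi (s *: n) = ray_factor n s *: psi n.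
Proof.
move=> hn n0; apply: lightlike_triangle_colinear; rewrite ?psi_null ?psi_neq0 //.
  exact: mqZ_lightlike.
by rewrite -psiB psi_null // -[X in _ - X]scale1r -scalerBl mqZ_lightlike.
Qed.

Lemma ray_factorD n : {morph ray_factor n : s t / s + t}.
Proof. by move=> s t; rewrite /ray_factor scalerDl psiD /= mulrDl. Qed.

Lemma ray_factor1 n : mq n = 0 -> n != 0 -> ray_factor n 1 = 1.
Proof.
by move=> hn n0; rewrite /ray_factor scale1r divff // lightlike_time_neq0 ?psi_null ?psi_neq0.
Qed.

Lemma ray_factor_inj n : mq n = 0 -> n != 0 -> injective (ray_factor n).
Proof.
move=> hn n0 s t e; have : s *: n = t *: n by apply: psi_inj; rewrite !psi_ray // e.
by move/(congr1 c4) => /=; apply: mulIf; apply: lightlike_time_neq0.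
Qed.

Lemma ray_factor_surj n r : mq n = 0 -> n != 0 -> exists s, ray_factor n s = r.
Proof.
move=> hn n0; have [u hu] := psi_surj (r *: psi n).
have hu0 : mq u = 0 by apply/psi_lightlike; rewrite hu mqZ_lightlike ?psi_null.
have hun : mq (u - n) = 0.
  apply/psi_lightlike; rewrite psiB hu -[X in _ - X]scale1r -scalerBl.
  by rewrite mqZ_lightlike ?psi_null.
exists (c4 u / c4 n); move: hu; rewrite {1}(lightlike_triangle_colinear hn n0 hu0 hun).
rewrite psi_ray // => /(congr1 c4) /=; apply: mulIf.
by apply: lightlike_time_neq0; rewrite ?psi_null ?psi_neq0.
Qed.

(* The two sides of [psi (s *: (a + b)) = psi (s *: (c + d))] give a linear
   relation between [psi a], [psi b] and [psi c], which are independent. *)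
Lemma ray_factor_parallelogram a b c d s :
  mq a = 0 -> mq b = 0 -> mq c = 0 -> mq d = 0 -> d != 0 ->
  mdot a b != 0 -> mdot a c != 0 -> mdot b c != 0 -> a + b = c + d ->
  [/\ ray_factor a s = ray_factor d s, ray_factor b s = ray_factor d s
    & ray_factor c s = ray_factor d s].
Proof.
move=> ha hb hc hd d0 hab hac hbc e.
have a0 := mdot_neq0l hab; have b0 := mdot_neq0r hab; have c0 := mdot_neq0r hac.
have psi_d : psi d = psi a + psi b - psi c.
  by apply: (addrI (psi c)); rewrite -[psi c + psi d]psiD -e psiD subrKC.
have := congr1 (fun v => psi (s *: v)) e; rewrite /= !scalerDr !psiD !psi_ray // psi_d.
move/eqP; rewrite -subr_eq0 => /eqP rel.
set ra := ray_factor a s in rel *; set rb := ray_factor b s in rel *.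
set rc := ray_factor c s in rel *; set rd := ray_factor d s in rel *.
have lin : (ra - rd) *: psi a + (rb - rd) *: psi b + (rd - rc) *: psi c = 0.
  by rewrite -rel; vec_ring.
have [] := lightlike_indep3 (psi_null ha) (psi_null hb) (psi_null hc)
  (psi_mdot_neq0 ha hb hab) (psi_mdot_neq0 ha hc hac) (psi_mdot_neq0 hb hc hbc) lin.
by move=> /subr0_eq -> /subr0_eq -> /subr0_eq ->.
Qed.


Local Notation sigma := (ray_factor n1).

Lemma ray_factor_null_basis p s : p \in null_basis -> ray_factor p s = sigma s.
Proof.
have hn1 : mq (n1 : vec Q) = 0 by vec_compute.
have hn2 : mq (n2 : vec Q) = 0 by vec_compute.
have h12 : mdot (n1 : vec Q) n2 != 0 by vec_compute.
have cfg c d : mq c = 0 -> mq d = 0 -> d != 0 -> mdot n1 c != 0 -> mdot n2 c != 0 ->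
    n1 + n2 = c + d -> ray_factor n2 s = sigma s /\ ray_factor c s = sigma s.
  move=> hc hd d0 h1c h2c e.
  by have [-> -> ->] := ray_factor_parallelogram s hn1 hn2 hc hd d0 h12 h1c h2c e.
rewrite !inE => /or4P[]/eqP-> //.
- by apply: (proj1 (cfg n3 (Vec 0 (-1) 0 1) _ _ _ _ _ _)); vec_compute.
- by apply: (proj2 (cfg n3 (Vec 0 (-1) 0 1) _ _ _ _ _ _)); vec_compute.
- by apply: (proj2 (cfg n4 (Vec 0 0 (-1) 1) _ _ _ _ _ _)); vec_compute.
Qed.

Lemma psi_scale_null_basis p s : p \in null_basis -> psi (s *: p) = sigma s *: psi p.
Proof.
move=> hp; rewrite psi_ray ?ray_factor_null_basis //.
  exact: null_basis_lightlike.
exact: null_basis_neq0.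
Qed.

Lemma sigmaD : {morph sigma : s t / s + t}.
Proof. exact: ray_factorD. Qed.

Lemma sigma1 : sigma 1 = 1.
Proof. by apply: ray_factor1; vec_compute. Qed.

Lemma sigma_inj : injective sigma.
Proof. by apply: ray_factor_inj; vec_compute. Qed.

(* [s *: n1 + t *: n2 + 2 *: e2] is lightlike exactly when [s * t = 1]. *)
Lemma sigma_reciprocal s t : s * t = 1 ->
  2 * sigma s * sigma t * mdot (psi n1) (psi n2) + 2 * sigma s * mdot (psi n1) (psi (2 *: e2))
  + 2 * sigma t * mdot (psi n2) (psi (2 *: e2)) + mq (psi (2 *: e2)) = 0.
Proof.
move=> st1; have : mq (s *: n1 + t *: n2 + 2 *: e2) = 0 by rewrite /mq /mdot /=; nra.
move/psi_null; rewrite !psiD (@psi_scale_null_basis n1) ?mem_head //.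
rewrite (@psi_scale_null_basis n2) ?inE ?eqxx ?orbT // mq_comb2.
by rewrite (psi_null (_ : mq n1 = 0)) 1?(psi_null (_ : mq n2 = 0)); [lra | vec_compute ..].
Qed.

(* The instances [s = 1, -1, 2] of [sigma_reciprocal] reduce it to
   [sigma s * sigma t = 1]. *)
Lemma sigmaV : {morph sigma : s / s^-1}.
Proof.
move=> s; have sigma0 := additive_map0 sigmaD.
have [->|s0] := eqVneq s 0; first by rewrite invr0 sigma0 invr0.
have sigma2 : sigma 2 = 2 by rewrite sigmaD sigma1.
have sigma_half : sigma 2^-1 = 2^-1.
  have half : 2^-1 + 2^-1 = 1 :> Q by field.
  by have := sigmaD 2^-1 2^-1; rewrite half sigma1; lra.
have A0 : mdot (psi n1) (psi n2) != 0 by apply: psi_mdot_neq0; vec_compute.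
have two0 : 2 != 0 :> Q by rewrite pnatr_eq0.
have R1 := sigma_reciprocal (mulr1 1); rewrite sigma1 in R1.
have Rm := sigma_reciprocal (etrans (mulrNN 1 1) (mulr1 1)).
rewrite (additive_mapN sigmaD) sigma1 in Rm.
have R2 := sigma_reciprocal (mulfV two0); rewrite sigma2 sigma_half in R2.
have Rs := sigma_reciprocal (mulfV s0).
set A := mdot (psi n1) (psi n2) in A0 R1 Rm R2 Rs.
set X := mdot (psi n1) (psi (2 *: e2)) in R1 Rm R2 Rs.
set Y := mdot (psi n2) (psi (2 *: e2)) in R1 Rm R2 Rs.
set W := mq (psi (2 *: e2)) in R1 Rm R2 Rs.
have [X0 Y0 W2A] : [/\ X = 0, Y = 0 & W = - 2 * A] by split; lra.
have : (sigma s * sigma s^-1 - 1) * (2 * A) = 0 by rewrite -Rs X0 Y0 W2A; ring.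
move/eqP; rewrite mulf_eq0 mulf_eq0 (negPf A0) pnatr_eq0 /= !orbF subr_eq0 => /eqP.
by move/mulr1_eq.
Qed.

Lemma sigmaM : {morph sigma : s t / s * t}.
Proof. exact: additive_inv_multiplicative sigmaD sigma1 sigma_inj sigmaV. Qed.

Lemma psi_semilinear s v : psi (s *: v) = sigma s *: psi v.
Proof.
rewrite (null_basis_decomp v) !scalerDr !scalerA !psiD.
by rewrite !psi_scale_null_basis ?inE ?eqxx ?orbT // !sigmaM; vec_ring.
Qed.

Lemma exists_time_stable_spacelike :
  exists w, [/\ c4 w = 0, c4 (psi w) = 0 & mq w != 0].
Proof.
have [h1|h1] := eqVneq (c4 (psi e1)) 0; first by exists e1; split => //; vec_compute.
have [x hx] : exists x, sigma x = - c4 (psi e2) / c4 (psi e1).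
  by apply: ray_factor_surj; vec_compute.
exists (x *: e1 + e2); split.
- by rewrite /=; ring.
- by rewrite psiD psi_semilinear /= hx; field.
- by rewrite /mq /mdot /=; apply/eqP; nra.
Qed.

Lemma sigma_id : sigma =1 id.
Proof.
have [w [w4 psiw4 w0]] := exists_time_stable_spacelike.
apply: additive_sqr_id sigmaD sigma1 _ => s; apply: (mulIf w0).
have sw4 : c4 (s *: w) = 0 by rewrite /= w4 mulr0.
have psw4 : c4 (psi (s *: w)) = 0 by rewrite psi_semilinear /= psiw4 mulr0.
by rewrite -[s ^+ 2 * _]mqZ -(psi_spacelike sw4 psw4) psi_semilinear mqZ psi_spacelike.
Qed.

Lemma psiZ s v : psi (s *: v) = s *: psi v.
Proof. by rewrite psi_semilinear sigma_id. Qed.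

Lemma psi_mq v : mq (psi v) = mq v.
Proof.
have conf := lightlike_preserving_conformal psiD psiZ psi_null.
have [w [w4 psiw4 w0]] := exists_time_stable_spacelike.
have k1 : mq (psi e1) = 1.
  by apply: (mulIf w0); rewrite mul1r -conf psi_spacelike.
by rewrite conf k1 mul1r.
Qed.

End AdditiveLightlikePreserving.

Section LightconePreservingIsometry.
Variables (Q : realFieldType) (f : vec Q -> vec Q).
Hypothesis f_inj : injective f.
Hypothesis f_surj : forall y, exists x, f x = y.
Hypothesis f_lightlike : forall x y, mq (x - y) = 0 <-> mq (f x - f y) = 0.
Hypothesis f_simultaneous : forall x y,
  c4 x = c4 y -> c4 (f x) = c4 (f y) -> mq (f x - f y) = mq (x - y).

Lemma lightlike_preserving_isometry x y : mq (f x - f y) = mq (x - y).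
Proof.
pose psi v := f v - f 0.
have f_aff := f_affine f_inj f_surj f_lightlike.
have psiD : {morph psi : u v / u + v} by move=> u v; rewrite /psi f_aff; vec_ring.
have psi_inj : injective psi by move=> u v /addIr /f_inj.
have psi_surj y' : exists x', psi x' = y'.
  by have [x' hx'] := f_surj (y' + f 0); exists x'; rewrite /psi hx' addrK.
have psi_lightlike v : mq v = 0 <-> mq (psi v) = 0 by rewrite -[v in mq v]subr0.
have psi_spacelike v : c4 v = 0 -> c4 (psi v) = 0 -> mq (psi v) = mq v.
  move=> v4; rewrite /psi /= => /eqP; rewrite subr_eq0 => /eqP fv4.
  by rewrite /psi f_simultaneous ?subr0 // v4.
have -> : f x - f y = psi (x - y) by rewrite /psi -{1}(subrKC y x) (f_aff y); vec_ring.
exact: psi_mq psiD psi_inj psi_surj psi_lightlike psi_spacelike (x - y).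
Qed.

End LightconePreservingIsometry.

Section Worldviews.
Variables (Q : realFieldType) (B : Type) (IB Ph : B -> Prop).
Variable W : B -> B -> Q -> Q -> Q -> Q -> Prop.
Hypothesis specrel : SpecRel IB Ph W.

Definition Wvec o b (u : vec Q) := W o b (c1 u) (c2 u) (c3 u) (c4 u).

Lemma photon_link o u v : IOb IB W o ->
  (exists p, Ph p /\ Wvec o p u /\ Wvec o p v) <-> mq (u - v) = 0.
Proof.
move=> Io; have [_ [AxPh _]] := specrel.
by rewrite (AxPh o _ _ _ _ _ _ _ _ Io) /mq /mdot /= !expr2; split => h; lra.
Qed.

Lemma Wvec_inj o u v : IOb IB W o -> (forall b, Wvec o b u <-> Wvec o b v) -> u = v.
Proof.
move=> Io uv; apply: lightcone_inj => p.
move=> /(photon_link p u Io) [ph [Php [Wp Wu]]]; apply/(photon_link p v Io).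
by exists ph; split => //; split => //; apply/uv.
Qed.

Lemma worldview_transformation_exists o o' : IOb IB W o -> IOb IB W o' ->
  exists f, forall u b, Wvec o b u <-> Wvec o' b (f u).
Proof.
move=> Io Io'; have [_ [_ [AxEv _]]] := specrel.
apply: (ClassicalEpsilon.choice (fun u u' => forall b, Wvec o b u <-> Wvec o' b u')) => u.
have [x1 [x2 [x3 [x4 h]]]] := AxEv o o' (c1 u) (c2 u) (c3 u) (c4 u) Io Io'.
by exists (Vec x1 x2 x3 x4).
Qed.

Lemma worldview_transformation_isometry o o' u u' v v' : IOb IB W o -> IOb IB W o' ->
  (forall b, Wvec o b u <-> Wvec o' b u') -> (forall b, Wvec o b v <-> Wvec o' b v') ->
  mq (u - v) = mq (u' - v').
Proof.
move=> Io Io' hu hv; have [_ [_ [AxEv AxSymd]]] := specrel.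
have [f hf] := worldview_transformation_exists Io Io'.
have fu : u' = f u by apply: (Wvec_inj Io') => b; rewrite -hu hf.
have fv : v' = f v by apply: (Wvec_inj Io') => b; rewrite -hv hf.
rewrite fu fv lightlike_preserving_isometry //.
- by move=> x y fxy; apply: (Wvec_inj Io) => b; rewrite !hf fxy.
- move=> y; have [x1 [x2 [x3 [x4 h]]]] := AxEv o' o (c1 y) (c2 y) (c3 y) (c4 y) Io' Io.
  by exists (Vec x1 x2 x3 x4); apply: (Wvec_inj Io') => b; rewrite -hf; split => /h.
- move=> x y; rewrite -(photon_link x y Io) -(photon_link (f x) (f y) Io').
  split=> -[p [Php [Wx Wy]]]; exists p.
    by split=> //; split; apply: (hf _ _).1.
  by split=> //; split; apply: (hf _ _).2.
- move=> x y x4y fx4y; have := AxSymd o o' _ _ _ _ _ _ _ _ _ _ _ _ _ _ _ _ Io Io' x4y fx4y (hf x) (hf y).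
  by rewrite /mq /mdot /= x4y fx4y !expr2 => h; lra.
Qed.

End Worldviews.

Theorem theorem2 (Q : realFieldType) (B : Type) (IB Ph : B -> Prop)
    (W : B -> B -> Q -> Q -> Q -> Q -> Prop) :
  SpecRel IB Ph W ->
  forall (o o' : B) (x1 x2 x3 x4 x1' x2' x3' x4' y1 y2 y3 y4 y1' y2' y3' y4' : Q),
    IOb IB W o -> IOb IB W o' ->
    (forall b, W o b x1 x2 x3 x4 <-> W o' b x1' x2' x3' x4') ->
    (forall b, W o b y1 y2 y3 y4 <-> W o' b y1' y2' y3' y4') ->
    mu x1 x2 x3 x4 y1 y2 y3 y4 = mu x1' x2' x3' x4' y1' y2' y3' y4'.
Proof.
move=> specrel o o' x1 x2 x3 x4 x1' x2' x3' x4' y1 y2 y3 y4 y1' y2' y3' y4' Io Io' hx hy.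
rewrite !mu_mq; exact: (worldview_transformation_isometry (u := Vec x1 x2 x3 x4)
  (u' := Vec x1' x2' x3' x4') (v := Vec y1 y2 y3 y4) (v' := Vec y1' y2' y3' y4') specrel Io Io' hx hy).
Qed.
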